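(* For every $\omega>0$ there exist $\Gamma>0$ and $N>0$ such that for every $\beta\in(0,1]$ the two-dimensional system $$\dot x=\omega A_0x-\beta\, b_0\frac{b_0^Tx}{(1+\|x\|^2)^{1/2}},\qquad x\in\mathbb{R}^2,$$ is $SISS_L\!\left(\beta\Gamma,\frac{N}{\beta}\right)$, its origin is globally asymptotically stable, and its linearization at $0$ is asymptotically stable.
   Context: $A_0=\begin{pmatrix}0&1\\-1&0\end{pmatrix}$, $b_0=\begin{pmatrix}0\\1\end{pmatrix}$, $\|\cdot\|$ is the Euclidean norm. Eventually bounded: $f:\mathbb{R}_{\ge0}\to\mathbb{R}^k$ is eventually bounded by $\delta$ if there is $T>0$ with $\|f(t)\|\le\delta$ for all $t\ge T$. $SISS_L(\Delta,N)$ for an input-free system $\dot x=f(x)$: for every $\delta\in(0,\Delta]$ and every bounded measurable $e:\mathbb{R}_{\ge0}\to\mathbb{R}^n$ eventually bounded by $\delta$, every solution of $\dot x=f(x)+e(t)$ is eventually bounded by $N\delta$. *)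

From Stdlib Require Import Reals Lra.
Open Scope R_scope.

Definition vec2 := (R * R)%type.
Definition vzero : vec2 := (0, 0).
Definition vnorm (x : vec2) : R := sqrt (fst x ^ 2 + snd x ^ 2).
Definition vadd (x y : vec2) : vec2 := (fst x + fst y, snd x + snd y).
Definition vsub (x y : vec2) : vec2 := (fst x - fst y, snd x - snd y).

Fixpoint rsum (f : nat -> R) (n : nat) : R :=
  match n with O => 0 | S k => rsum f k + f k end.

Definition covers (A : R -> Prop) (a b : nat -> R) : Prop :=
  (forall n, a n <= b n) /\ (forall t, A t -> exists n, a n < t < b n).

(* Lebesgue outer measure of A is <= r *)
Definition outer_le (A : R -> Prop) (r : R) : Prop :=
  forall eps, 0 < eps -> exists a b : nat -> R,
    covers A a b /\ forall n, rsum (fun i => b i - a i) n <= r + eps.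

Definition null_set (A : R -> Prop) : Prop := outer_le A 0.

(* Caratheodory criterion: m*(S) >= m*(S /\ A) + m*(S \ A) for all S *)
Definition leb_measurable (A : R -> Prop) : Prop :=
  forall (S : R -> Prop) r, outer_le S r ->
  forall eps, 0 < eps -> exists r1 r2,
    outer_le (fun t => S t /\ A t) r1 /\
    outer_le (fun t => S t /\ ~ A t) r2 /\ r1 + r2 <= r + eps.

Definition meas_fun (g : R -> R) : Prop :=
  forall c, leb_measurable (fun t => 0 <= t /\ g t < c).

Definition meas_vec (e : R -> vec2) : Prop :=
  meas_fun (fun t => fst (e t)) /\ meas_fun (fun t => snd (e t)).

Definition bounded_vec (e : R -> vec2) : Prop :=
  exists M, forall t, 0 <= t -> vnorm (e t) <= M.

Definition eventually_bounded (f : R -> vec2) (d : R) : Prop :=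
  exists T, 0 < T /\ forall t, T <= t -> vnorm (f t) <= d.

Definition abs_cont_on (g : R -> R) (T : R) : Prop :=
  forall eps, 0 < eps -> exists delta, 0 < delta /\
    forall (n : nat) (a b : nat -> R),
      (forall i, (i < n)%nat -> 0 <= a i <= b i /\ b i <= T) ->
      (forall i, (S i < n)%nat -> b i <= a (S i)) ->
      rsum (fun i => b i - a i) n < delta ->
      rsum (fun i => Rabs (g (b i) - g (a i))) n < eps.

(* x : [0,oo) -> R^2 is a (Caratheodory) solution of x' = F x + e(t):
   locally absolutely continuous, and the ODE holds for almost every t >= 0. *)
Definition is_solution (F : vec2 -> vec2) (e : R -> vec2) (x : R -> vec2) : Prop :=
  (forall T, 0 < T ->
     abs_cont_on (fun t => fst (x t)) T /\ abs_cont_on (fun t => snd (x t)) T) /\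
  exists Nul, null_set Nul /\
    forall t, 0 < t -> ~ Nul t ->
      derivable_pt_lim (fun s => fst (x s)) t (fst (vadd (F (x t)) (e t))) /\
      derivable_pt_lim (fun s => snd (x s)) t (snd (vadd (F (x t)) (e t))).

Definition no_input : R -> vec2 := fun _ => vzero.

Definition SISS_L (F : vec2 -> vec2) (Delta N : R) : Prop :=
  forall d, 0 < d <= Delta ->
  forall e : R -> vec2, meas_vec e -> bounded_vec e -> eventually_bounded e d ->
  forall x, is_solution F e x -> eventually_bounded x (N * d).

Definition converges_to_0 (x : R -> vec2) : Prop :=
  forall eps, 0 < eps -> exists T, forall t, T <= t -> vnorm (x t) < eps.

Definition lyap_stable (F : vec2 -> vec2) : Prop :=
  forall eps, 0 < eps -> exists delta, 0 < delta /\
    forall x, is_solution F no_input x -> vnorm (x 0) < delta ->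
      forall t, 0 <= t -> vnorm (x t) < eps.

Definition asympt_stable (F : vec2 -> vec2) : Prop :=
  lyap_stable F /\ exists r, 0 < r /\
    forall x, is_solution F no_input x -> vnorm (x 0) < r -> converges_to_0 x.

Definition glob_asympt_stable (F : vec2 -> vec2) : Prop :=
  lyap_stable F /\ forall x, is_solution F no_input x -> converges_to_0 x.

Record mat2 := Mat2 { m11 : R; m12 : R; m21 : R; m22 : R }.
Definition mapply (J : mat2) (x : vec2) : vec2 :=
  (m11 J * fst x + m12 J * snd x, m21 J * fst x + m22 J * snd x).

Definition frechet_deriv_at0 (F : vec2 -> vec2) (J : mat2) : Prop :=
  forall eps, 0 < eps -> exists delta, 0 < delta /\
    forall x, vnorm x < delta ->
      vnorm (vsub (vsub (F x) (F vzero)) (mapply J x)) <= eps * vnorm x.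

Definition linearization_AS (F : vec2 -> vec2) : Prop :=
  exists J, frechet_deriv_at0 F J /\ asympt_stable (mapply J).

Definition A0 (x : vec2) : vec2 := (snd x, - fst x).        (* [[0,1],[-1,0]] x *)
Definition b0 : vec2 := (0, 1).
Definition dot (x y : vec2) : R := fst x * fst y + snd x * snd y.
Definition vscale (c : R) (x : vec2) : vec2 := (c * fst x, c * snd x).

Definition sys (omega beta : R) (x : vec2) : vec2 :=
  vsub (vscale omega (A0 x))
       (vscale (beta * (dot b0 x / sqrt (1 + vnorm x ^ 2))) b0).

From Stdlib Require Import Reals Lra Lia ClassicalEpsilon.
Open Scope R_scope.

(* The Lyapunov function is [V x = |x|^2 + k x1 x2 / sqrt (1 + |x|^2)], [k = kappa beta / omega]:
   the cross term converts the rotation [omega A0] into decay of the undamped coordinate [x1].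
   Along [x' = f x + e] one has [7/8 |x|^2 <= V x <= 9/8 |x|^2] and
     [V' <= - (kappa beta / 2) |x|^2 / sqrt (1 + |x|^2) + 3 |x| |e|].
   The decay term grows only linearly in [|x|], so it dominates the input term as soon as
   [|x| >= 14 |e| / (kappa beta)] provided [|e| <= kappa beta / 24]; this gives the SISS property
   with [Gamma = kappa / 24] and [N = 28 / kappa].  Zero input yields global asymptotic stability,
   and the quadratic part of [V] does the same for the linearization.  Solutions are only
   Caratheodory solutions, so monotonicity of [V] along them is derived from absolute continuity
   and an almost-everywhere derivative, by means of Cousin's lemma. *)

Lemma Rabs_le_inv a b : Rabs a <= b -> - b <= a <= b.
Proof.
  intros H. pose proof (Rle_abs a). pose proof (Rle_abs (- a)). rewrite Rabs_Ropp in *. lra.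
Qed.

(** * Finite sums *)

Lemma rsum_ext f g n : (forall i, (i < n)%nat -> f i = g i) -> rsum f n = rsum g n.
Proof.
  induction n as [|n IH]; intros H; simpl; [reflexivity|].
  rewrite IH, H; auto.
Qed.

Lemma rsum_le f g n : (forall i, (i < n)%nat -> f i <= g i) -> rsum f n <= rsum g n.
Proof.
  induction n as [|n IH]; intros H; simpl; [lra|].
  apply Rplus_le_compat; auto.
Qed.

Lemma rsum_plus f g n : rsum (fun i => f i + g i) n = rsum f n + rsum g n.
Proof. induction n; simpl; lra. Qed.

Lemma rsum_scal c f n : rsum (fun i => c * f i) n = c * rsum f n.
Proof. induction n as [|n IH]; simpl; [ring|]. rewrite IH; ring. Qed.

Lemma rsum_zero n : rsum (fun _ => 0) n = 0.
Proof. induction n; simpl; lra. Qed.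

Lemma rsum_shift f n : rsum f (S n) = f 0%nat + rsum (fun i => f (S i)) n.
Proof. induction n as [|n IH]; simpl in *; [lra|]. rewrite IH; lra. Qed.

Lemma rsum_telescope f n : rsum (fun k => f (S k) - f k) n = f n - f 0%nat.
Proof. induction n as [|n IH]; simpl; [lra|]. rewrite IH; lra. Qed.

Lemma rsum_swap (f : nat -> nat -> R) K M :
  rsum (fun k => rsum (f k) M) K = rsum (fun n => rsum (fun k => f k n) K) M.
Proof.
  induction K as [|K IH]; simpl; [now rewrite rsum_zero|].
  rewrite IH, <- rsum_plus; reflexivity.
Qed.

Lemma rsum_delta m c M : (m < M)%nat ->
  rsum (fun n => if Nat.eq_dec m n then c else 0) M = c.
Proof.
  induction M as [|M IH]; intros Hm; [lia|]. simpl.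
  destruct (Nat.eq_dec m M) as [->|Hne].
  - rewrite (rsum_ext _ (fun _ => 0)), rsum_zero; [lra|].
    intros i Hi; destruct (Nat.eq_dec M i); [lia|reflexivity].
  - rewrite IH; [lra|lia].
Qed.

Lemma nonoverlapping_length_le (x h : nat -> R) a b K :
  (forall k, (k < K)%nat -> x k <= x (S k)) -> a <= b ->
  (forall k, (k < K)%nat -> h k = 0 \/ (h k = x (S k) - x k /\ a <= x k /\ x (S k) <= b)) ->
  rsum h K <= b - a.
Proof.
  intros Hmon Hab Hh.
  assert (Hpre : forall m, (m <= K)%nat -> rsum h m <= Rmax 0 (Rmin (x m) b - a)).
  { induction m as [|m IH]; intros Hm; simpl.
    - unfold Rmax; destruct Rle_dec; lra.
    - specialize (IH ltac:(lia)). specialize (Hmon m ltac:(lia)).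
      destruct (Hh m ltac:(lia)) as [-> | [-> [Ha Hb]]];
        revert IH; unfold Rmax, Rmin; repeat destruct Rle_dec; lra. }
  specialize (Hpre K (le_n K)). revert Hpre; unfold Rmax, Rmin; repeat destruct Rle_dec; lra.
Qed.

Lemma finite_nat_bound (nk : nat -> nat) K : exists M, forall k, (k < K)%nat -> (nk k < M)%nat.
Proof.
  induction K as [|K [M HM]]; [exists 0%nat; lia|].
  exists (Nat.max M (S (nk K))). intros k Hk.
  destruct (Nat.eq_dec k K) as [->|]; [lia|]. specialize (HM k ltac:(lia)); lia.
Qed.

Lemma covered_length_le (x h a b : nat -> R) (nk : nat -> nat) K :
  (forall k, (k < K)%nat -> x k <= x (S k)) -> (forall n, a n <= b n) ->
  (forall k, (k < K)%nat -> h k = 0 \/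
     (h k = x (S k) - x k /\ a (nk k) <= x k /\ x (S k) <= b (nk k))) ->
  exists M, rsum h K <= rsum (fun n => b n - a n) M.
Proof.
  intros Hmon Hab Hh. destruct (finite_nat_bound nk K) as [M HM]. exists M.
  rewrite (rsum_ext h (fun k => rsum (fun n => if Nat.eq_dec (nk k) n then h k else 0) M)).
  - rewrite rsum_swap. apply rsum_le. intros n _.
    apply (nonoverlapping_length_le x); auto.
    intros k Hk. destruct (Nat.eq_dec (nk k) n) as [<-|]; [|now left].
    destruct (Hh k Hk) as [|[? ?]]; [now left|now right].
  - intros k Hk. symmetry. apply rsum_delta, HM, Hk.
Qed.

(** * Cousin's lemma and monotonicity of absolutely continuous functions *)

(* [fine t p q]: the tag [t] is acceptable for the subinterval [[p, q]]. *)
Definition tagged_partition (fine : R -> R -> R -> Prop) u v K (x tau : nat -> R) : Prop :=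
  x 0%nat = u /\ x K = v /\ (forall k, (k <= K)%nat -> u <= x k <= v) /\
  (forall k, (k < K)%nat -> x k <= tau k <= x (S k) /\ fine (tau k) (x k) (x (S k))).

Lemma tagged_partition_snoc fine u s w t K x tau :
  tagged_partition fine u s K x tau -> s <= t <= w -> fine t s w ->
  tagged_partition fine u w (S K) (fun k => if Nat.leb k K then x k else w)
                                  (fun k => if Nat.ltb k K then tau k else t).
Proof.
  intros (H0 & HK & Hb & Hf) Ht Hfine.
  assert (HSK : Nat.leb (S K) K = false) by (apply Nat.leb_gt; lia).
  split; [|split; [|split]].
  - exact H0.
  - now rewrite HSK.
  - intros k Hk. pose proof (Hb K (le_n K)).
    destruct (Nat.leb_spec k K); [specialize (Hb k ltac:(lia))|]; lra.
  - intros k Hk. rewrite (proj2 (Nat.leb_le k K) ltac:(lia)).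
    destruct (Nat.ltb_spec k K).
    + rewrite (proj2 (Nat.leb_le (S k) K) ltac:(lia)). now apply Hf.
    + replace k with K by lia. rewrite HSK, HK. split; [lra|exact Hfine].
Qed.

Lemma cousin (fine : R -> R -> R -> Prop) u v : u <= v ->
  (forall t, u <= t <= v -> exists d, 0 < d /\
     forall p q, u <= p <= t -> t <= q <= v -> q - p < d -> fine t p q) ->
  exists K x tau, tagged_partition fine u v K x tau.
Proof.
  intros Huv Hgauge.
  set (E := fun s => u <= s <= v /\ exists K x tau, tagged_partition fine u s K x tau).
  assert (Eu : E u).
  { split; [lra|]. exists O, (fun _ => u), (fun _ => u).
    repeat split; auto; intros; lra || lia. }
  destruct (completeness E (ex_intro _ v (fun s Hs => proj2 (proj1 Hs))) (ex_intro _ u Eu))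
    as [sg [Hub Hlub]].
  assert (Hsg : u <= sg <= v) by (split; [apply Hub, Eu|apply Hlub; intros s [Hs _]; lra]).
  destruct (Hgauge sg Hsg) as [d [Hd Hfine]].
  assert (Hnear : exists s, E s /\ sg - d/2 < s).
  { apply NNPP; intro Hno. assert (sg <= sg - d/2); [|lra].
    apply Hlub. intros s Hs. apply Rnot_lt_le. intro Hlt. apply Hno; eauto. }
  destruct Hnear as [s [[Hs [K [x [tau Hp]]]] Hss]].
  assert (s <= sg) by (apply Hub; split; eauto).
  set (w := Rmin v (sg + d/4)).
  assert (Hw : sg <= w <= v /\ w <= sg + d/4) by (unfold w, Rmin; destruct Rle_dec; lra).
  pose proof (tagged_partition_snoc fine u s w sg K x tau Hp ltac:(lra)
                 (Hfine s w ltac:(lra) ltac:(lra) ltac:(lra))) as Hpw.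
  assert (w <= sg) by (apply Hub; split; [lra|eauto]).
  replace v with w by (unfold w, Rmin in *; destruct Rle_dec; lra). eauto.
Qed.

Lemma null_set_add_point N u : null_set N -> null_set (fun t => N t \/ t = u).
Proof.
  intros HN eps Heps. destruct (HN (eps/2)) as [a [b [[Hab Hcov] Hlen]]]; [lra|].
  exists (fun i => match i with O => u - eps/8 | S j => a j end).
  exists (fun i => match i with O => u + eps/8 | S j => b j end).
  split; [split|].
  - intros [|n]; [lra|apply Hab].
  - intros t [Ht| ->]; [|exists O; lra].
    destruct (Hcov t Ht) as [n Hn]. now exists (S n).
  - intros [|n]; [simpl; lra|]. rewrite rsum_shift. specialize (Hlen n). simpl. lra.
Qed.

Lemma abs_cont_on_covered_increments g T : abs_cont_on g T ->
  forall eps, 0 < eps -> exists dl, 0 < dl /\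
  forall (x a b : nat -> R) K (covered : nat -> Prop),
    (forall k, (k <= K)%nat -> 0 <= x k <= T) -> (forall k, (k < K)%nat -> x k <= x (S k)) ->
    (forall n, a n <= b n) -> (forall M, rsum (fun n => b n - a n) M <= dl / 2) ->
    (forall k, covered k -> exists n, a n <= x k /\ x (S k) <= b n) ->
    rsum (fun k => if excluded_middle_informative (covered k)
                   then Rabs (g (x (S k)) - g (x k)) else 0) K < eps.
Proof.
  intros Hac eps Heps. destruct (Hac eps Heps) as [dl [Hdl Hac']]. exists dl.
  split; [exact Hdl|]. intros x a b K covered Hx Hmon Hab Hsmall Hcov.
  destruct (choice (fun k n => covered k -> a n <= x k /\ x (S k) <= b n)) as [nk Hnk].
  { intros k. destruct (classic (covered k)) as [Hc|Hc]; [|now exists O].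
    destruct (Hcov k Hc) as [n Hn]. now exists n. }
  (* Collapse the uncovered subintervals to points and apply absolute continuity. *)
  set (bb := fun k => if excluded_middle_informative (covered k) then x (S k) else x k).
  rewrite (rsum_ext _ (fun k => Rabs (g (bb k) - g (x k)))).
  2:{ intros k _. unfold bb. destruct excluded_middle_informative; [reflexivity|].
      now rewrite Rminus_diag, Rabs_R0. }
  apply Hac'.
  - intros i Hi. pose proof (Hx i ltac:(lia)). pose proof (Hx (S i) ltac:(lia)).
    pose proof (Hmon i Hi). unfold bb. destruct excluded_middle_informative; lra.
  - intros i Hi. pose proof (Hmon i ltac:(lia)). unfold bb.
    destruct excluded_middle_informative; lra.
  - destruct (covered_length_le x (fun k => bb k - x k) a b nk K Hmon Hab) as [M HM].
    + intros k Hk. unfold bb. destruct excluded_middle_informative as [Hc|]; [|left; ring].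
      right. split; [reflexivity|]. now apply Hnk.
    + specialize (Hsmall M). lra.
Qed.

Definition slope_le (g : R -> R) (t m : R) : Prop :=
  forall eta, 0 < eta -> exists d, 0 < d /\
    forall p q, t - d < p <= t -> t <= q < t + d -> g q - g p <= (m + eta) * (q - p).

Lemma abs_cont_on_nonincreasing_slope g T u v N :
  0 <= u -> u <= v -> v <= T -> abs_cont_on g T -> null_set N ->
  (forall t, u < t <= v -> ~ N t -> slope_le g t 0) -> g v <= g u.
Proof.
  intros Hu Huv HvT Hac HN Hslope.
  cut (g v - g u <= 0); [lra|]. apply Rle_plus_epsilon. intros eps' Heps'.
  set (eps := eps' / 2). assert (Heps : 0 < eps) by (unfold eps; lra).
  set (eta := eps / (v - u + 1)).
  assert (Heta : 0 < eta) by (unfold eta; apply Rdiv_lt_0_compat; lra).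
  assert (Heta_len : eta * (v - u) <= eps).
  { unfold eta. apply Rmult_le_reg_r with (v - u + 1); [lra|]. field_simplify; [nra|lra]. }
  destruct (abs_cont_on_covered_increments g T Hac eps Heps) as [dl [Hdl Hcovered]].
  destruct (null_set_add_point N u HN (dl/2) ltac:(lra)) as [a [b [[Hab Hcov] Hsmall]]].
  (* Exceptional points get tags whose subinterval lies in a covering interval; the others
     get tags on which [g] grows at slope at most [eta]. *)
  set (fine := fun t p q : R =>
         (exists n, a n <= p /\ q <= b n) \/ g q - g p <= eta * (q - p)).
  destruct (cousin fine u v Huv) as [K [x [tau (Hx0 & HxK & Hxb & Hfine)]]].
  { intros t Ht. destruct (classic (N t \/ t = u)) as [Hex|Hex].
    - destruct (Hcov t Hex) as [n Hn]. exists (Rmin (t - a n) (b n - t)).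
      split; [unfold Rmin; destruct Rle_dec; lra|].
      intros p q Hp Hq Hpq. left. exists n. revert Hpq; unfold Rmin; destruct Rle_dec; lra.
    - assert (Htu : u < t) by (destruct (Req_dec t u); [tauto|lra]).
      destruct (Hslope t ltac:(lra) ltac:(tauto) eta Heta) as [d [Hd Hd']].
      exists d; split; [exact Hd|]. intros p q Hp Hq Hpq. right.
      rewrite <- (Rplus_0_l eta). apply Hd'; lra. }
  assert (Hmon : forall k, (k < K)%nat -> x k <= x (S k)).
  { intros k Hk. destruct (Hfine k Hk) as [? _]. lra. }
  set (covered := fun k => exists n, a n <= x k /\ x (S k) <= b n).
  specialize (Hcovered x a b K covered ltac:(intros k Hk; specialize (Hxb k Hk); lra) Hmon Hab
                ltac:(intros M; specialize (Hsmall M); lra) ltac:(easy)).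
  assert (Hsplit : g v - g u <= rsum (fun k =>
            (if excluded_middle_informative (covered k) then Rabs (g (x (S k)) - g (x k)) else 0)
            + eta * (x (S k) - x k)) K).
  { rewrite <- Hx0, <- HxK, <- (rsum_telescope (fun k => g (x k))). apply rsum_le.
    intros k Hk. pose proof (Hmon k Hk). destruct excluded_middle_informative as [Hc|Hc].
    - pose proof (Rle_abs (g (x (S k)) - g (x k))). nra.
    - destruct (Hfine k Hk) as [_ [Hin|Hslow]]; [tauto|lra]. }
  rewrite rsum_plus, rsum_scal, rsum_telescope, Hx0, HxK in Hsplit. unfold eps in *. lra.
Qed.

(** * Closure properties of absolute continuity *)

Lemma abs_cont_on_nonpos g T : T <= 0 -> abs_cont_on g T.
Proof.
  intros HT eps Heps. exists 1; split; [lra|]. intros n a b Hab _ _.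
  rewrite (rsum_ext _ (fun _ => 0)), rsum_zero; auto.
  intros i Hi. destruct (Hab i Hi) as [? ?]. replace (b i) with (a i) by lra.
  rewrite Rminus_diag, Rabs_R0; reflexivity.
Qed.

Lemma abs_cont_on_small_increment g T : abs_cont_on g T -> forall eps, 0 < eps ->
  exists d, 0 < d /\ forall a b, 0 <= a -> a <= b -> b <= T -> b - a < d -> Rabs (g b - g a) < eps.
Proof.
  intros Hac eps Heps. destruct (Hac eps Heps) as [d [Hd H]]. exists d; split; auto.
  intros a b Ha Hab Hb Hba. specialize (H 1%nat (fun _ => a) (fun _ => b)). simpl in H.
  cut (0 + Rabs (g b - g a) < eps); [lra|]. apply H; [intros; lra|intros; lia|lra].
Qed.

Lemma abs_cont_on_bounded g T : abs_cont_on g T ->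
  exists B, forall t, 0 <= t -> t <= T -> Rabs (g t) <= B.
Proof.
  intros Hac. destruct (abs_cont_on_small_increment g T Hac 1 ltac:(lra)) as [d [Hd Hinc]].
  assert (Hsteps : forall m : nat, forall t, 0 <= t -> t <= T -> t <= INR m * (d/2) ->
                     Rabs (g t - g 0) <= INR m).
  { induction m as [|m IH]; intros t Ht0 HtT Htm.
    - simpl in Htm. replace t with 0 by lra. rewrite Rminus_diag, Rabs_R0; simpl; lra.
    - rewrite S_INR in *. set (t' := Rmax 0 (t - d/2)).
      assert (0 <= t' /\ t' <= t /\ t - t' <= d/2 /\ t' <= INR m * (d/2))
        by (unfold t', Rmax; destruct Rle_dec; pose proof (pos_INR m); nra).
      specialize (Hinc t' t ltac:(lra) ltac:(lra) ltac:(lra) ltac:(lra)).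
      specialize (IH t' ltac:(lra) ltac:(lra) ltac:(lra)).
      replace (g t - g 0) with ((g t - g t') + (g t' - g 0)) by ring.
      eapply Rle_trans; [apply Rabs_triang|lra]. }
  destruct (INR_archimed (d/2) T ltac:(lra)) as [m Hm].
  exists (INR m + Rabs (g 0)). intros t Ht0 HtT.
  specialize (Hsteps m t Ht0 HtT ltac:(lra)).
  replace (g t) with ((g t - g 0) + g 0) by ring.
  eapply Rle_trans; [apply Rabs_triang|lra].
Qed.

Lemma abs_cont_on_dominated h f g T C : 0 <= C -> abs_cont_on f T -> abs_cont_on g T ->
  (forall a b, 0 <= a -> a <= b -> b <= T ->
     Rabs (h b - h a) <= C * (Rabs (f b - f a) + Rabs (g b - g a))) ->
  abs_cont_on h T.
Proof.
  intros HC Hf Hg Hh eps Heps.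
  set (e' := eps / (2 * (C + 1))).
  assert (He' : 0 < e') by (unfold e'; apply Rdiv_lt_0_compat; lra).
  assert (HCe : C * (2 * e') < eps)
    by (unfold e'; apply Rmult_lt_reg_r with (C + 1); [lra|]; field_simplify; lra).
  destruct (Hf e' He') as [d1 [Hd1 H1]]. destruct (Hg e' He') as [d2 [Hd2 H2]].
  exists (Rmin d1 d2). split; [now apply Rmin_glb_lt|].
  intros n a b Hab Hord Hs.
  pose proof (Rmin_l d1 d2). pose proof (Rmin_r d1 d2).
  specialize (H1 n a b Hab Hord ltac:(lra)). specialize (H2 n a b Hab Hord ltac:(lra)).
  eapply Rle_lt_trans.
  - apply rsum_le with
      (g := fun i => C * (Rabs (f (b i) - f (a i)) + Rabs (g (b i) - g (a i)))).
    intros i Hi. destruct (Hab i Hi) as [[? ?] ?]. now apply Hh.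
  - rewrite rsum_scal, rsum_plus. nra.
Qed.

Lemma abs_cont_on_id T : abs_cont_on (fun t => t) T.
Proof.
  intros eps Heps. exists eps; split; auto. intros n a b Hab _ Hs.
  rewrite (rsum_ext _ (fun i => b i - a i)); auto.
  intros i Hi. destruct (Hab i Hi) as [[? ?] ?]. rewrite Rabs_right; lra.
Qed.

Lemma abs_cont_on_const c T : abs_cont_on (fun _ => c) T.
Proof.
  apply (abs_cont_on_dominated _ _ _ T 0 ltac:(lra) (abs_cont_on_id T) (abs_cont_on_id T)).
  intros. rewrite Rminus_diag, Rabs_R0. lra.
Qed.

Lemma abs_cont_on_plus f g T :
  abs_cont_on f T -> abs_cont_on g T -> abs_cont_on (fun t => f t + g t) T.
Proof.
  intros Hf Hg. apply (abs_cont_on_dominated _ f g T 1); auto; [lra|]. intros a b _ _ _.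
  replace (f b + g b - (f a + g a)) with ((f b - f a) + (g b - g a)) by ring.
  eapply Rle_trans; [apply Rabs_triang|lra].
Qed.

Lemma abs_cont_on_scal c f T : abs_cont_on f T -> abs_cont_on (fun t => c * f t) T.
Proof.
  intros Hf. apply (abs_cont_on_dominated _ f f T (Rabs c)); auto; [apply Rabs_pos|].
  intros a b _ _ _. replace (c * f b - c * f a) with (c * (f b - f a)) by ring.
  rewrite Rabs_mult. pose proof (Rabs_pos c). pose proof (Rabs_pos (f b - f a)). nra.
Qed.

Lemma abs_cont_on_mult f g T :
  abs_cont_on f T -> abs_cont_on g T -> abs_cont_on (fun t => f t * g t) T.
Proof.
  intros Hf Hg.
  destruct (abs_cont_on_bounded f T Hf) as [Bf HBf].
  destruct (abs_cont_on_bounded g T Hg) as [Bg HBg].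
  apply (abs_cont_on_dominated _ f g T (Rabs Bf + Rabs Bg)); auto.
  { pose proof (Rabs_pos Bf); pose proof (Rabs_pos Bg); lra. }
  intros a b Ha Hab Hb.
  replace (f b * g b - f a * g a) with (f b * (g b - g a) + g a * (f b - f a)) by ring.
  eapply Rle_trans; [apply Rabs_triang|]. rewrite !Rabs_mult.
  assert (Rabs (f b) <= Rabs Bf) by (eapply Rle_trans; [apply HBf; lra|apply RRle_abs]).
  assert (Rabs (g a) <= Rabs Bg) by (eapply Rle_trans; [apply HBg; lra|apply RRle_abs]).
  pose proof (Rabs_pos (f b)); pose proof (Rabs_pos (g a)).
  pose proof (Rabs_pos (g b - g a)); pose proof (Rabs_pos (f b - f a)). nra.
Qed.

Lemma abs_cont_on_lipschitz_comp (phi : R -> R) (P : R -> Prop) L f T :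
  0 <= L -> abs_cont_on f T -> (forall t, 0 <= t -> t <= T -> P (f t)) ->
  (forall y z, P y -> P z -> Rabs (phi y - phi z) <= L * Rabs (y - z)) ->
  abs_cont_on (fun t => phi (f t)) T.
Proof.
  intros HL Hf HP Hphi. apply (abs_cont_on_dominated _ f f T L); auto.
  intros a b Ha Hab Hb. eapply Rle_trans; [apply Hphi; apply HP; lra|].
  pose proof (Rabs_pos (f b - f a)). nra.
Qed.

(** * Functions with a controlled derivative almost everywhere *)

Lemma derivable_increment_le g t D : derivable_pt_lim g t D ->
  forall eta, 0 < eta -> exists d, 0 < d /\
    forall h, Rabs h < d -> Rabs (g (t + h) - g t - D * h) <= eta * Rabs h.
Proof.
  intros Hd eta Heta. destruct (Hd eta Heta) as [[d Hdp] Hdd]. simpl in Hdd.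
  exists d; split; [exact Hdp|]. intros h Hh.
  destruct (Req_dec h 0) as [->|Hh0].
  - rewrite Rplus_0_r, Rabs_R0. replace (g t - g t - D * 0) with 0 by ring.
    rewrite Rabs_R0; lra.
  - replace (g (t + h) - g t - D * h) with (h * ((g (t + h) - g t) / h - D)) by (field; exact Hh0).
    rewrite Rabs_mult, (Rmult_comm eta). specialize (Hdd h Hh0 Hh).
    apply Rmult_le_compat_l; [apply Rabs_pos|lra].
Qed.

Lemma derivable_slope_le g t D : derivable_pt_lim g t D -> slope_le g t D.
Proof.
  intros Hd eta Heta.
  destruct (derivable_increment_le g t D Hd (eta/2) ltac:(lra)) as [d [Hdp Hinc]].
  exists d; split; [exact Hdp|]. intros p q Hp Hq.
  pose proof (Hinc (q - t) ltac:(rewrite Rabs_right; lra)) as Hq'.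
  pose proof (Hinc (p - t) ltac:(rewrite Rabs_left1; lra)) as Hp'.
  replace (t + (q - t)) with q in Hq' by ring. replace (t + (p - t)) with p in Hp' by ring.
  rewrite (Rabs_right (q - t)) in Hq' by lra. rewrite (Rabs_left1 (p - t)) in Hp' by lra.
  pose proof (Rle_abs (g q - g t - D * (q - t))).
  pose proof (Rle_abs (- (g p - g t - D * (p - t)))). rewrite Rabs_Ropp in *. nra.
Qed.

Lemma abs_cont_on_nonincreasing_deriv g T u v N :
  0 <= u -> u <= v -> v <= T -> abs_cont_on g T -> null_set N ->
  (forall t, u < t <= v -> ~ N t -> exists D, derivable_pt_lim g t D /\ D <= 0) ->
  g v <= g u.
Proof.
  intros Hu Huv HvT Hac HN Hd. apply (abs_cont_on_nonincreasing_slope g T u v N); auto.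
  intros t Ht Hn eta Heta. destruct (Hd t Ht Hn) as [D [HD HD0]].
  destruct (derivable_slope_le g t D HD eta Heta) as [d [Hdp Hslope]].
  exists d; split; [exact Hdp|]. intros p q Hp Hq.
  specialize (Hslope p q Hp Hq). nra.
Qed.

(* Truncating at a level [th] keeps the slope nonpositive where [w] decreases above [th]:
   below [th], the truncation is locally constant. *)
Lemma slope_le_max_level w th t D : derivable_pt_lim w t D -> (th <= w t -> D <= 0) ->
  slope_le (fun s => Rmax (w s) th) t 0.
Proof.
  intros HD Hsign eta Heta.
  destruct (derivable_slope_le w t D HD eta Heta) as [d0 [Hd0 Hslope]].
  destruct (Rle_lt_dec D 0) as [HD0|HD0].
  - exists d0; split; [exact Hd0|]. intros p q Hp Hq. specialize (Hslope p q Hp Hq).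
    unfold Rmax; repeat destruct Rle_dec; nra.
  - assert (Hbelow : w t < th)
      by (destruct (Rle_lt_dec th (w t)) as [H|H]; [specialize (Hsign H)|]; lra).
    set (d1 := (th - w t) / (D + eta)).
    assert (Hd1 : 0 < d1) by (unfold d1; apply Rdiv_lt_0_compat; lra).
    exists (Rmin d0 d1). split; [now apply Rmin_glb_lt|].
    intros p q Hp Hq. pose proof (Rmin_l d0 d1). pose proof (Rmin_r d0 d1).
    specialize (Hslope t q ltac:(lra) ltac:(lra)).
    assert (Hstep : (D + eta) * (q - t) <= th - w t).
    { apply Rle_trans with ((D + eta) * d1); [apply Rmult_le_compat_l; lra|].
      unfold d1. right. field. lra. }
    unfold Rmax; repeat destruct Rle_dec; nra.
Qed.

Section Threshold.

Variables (w : R -> R) (N : R -> Prop) (T0 th : R).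
Hypotheses (HT0 : 0 <= T0) (Hac : forall T, abs_cont_on w T) (HN : null_set N).

Lemma stays_below :
  (forall t, T0 < t -> ~ N t -> exists D, derivable_pt_lim w t D /\ (th <= w t -> D <= 0)) ->
  forall s, T0 <= s -> w s <= th -> forall t, s <= t -> w t <= th.
Proof.
  intros Hd s Hs Hws t Hst.
  cut (Rmax (w t) th <= Rmax (w s) th); [unfold Rmax; repeat destruct Rle_dec; lra|].
  apply (abs_cont_on_nonincreasing_slope (fun y => Rmax (w y) th) t s t N); auto; try lra.
  - apply (abs_cont_on_lipschitz_comp (fun y => Rmax y th) (fun _ => True) 1 w t); auto; [lra|].
    intros y z _ _. unfold Rmax; repeat destruct Rle_dec; unfold Rabs;
      repeat destruct Rcase_abs; lra.
  - intros tau Htau Hn. destruct (Hd tau ltac:(lra) Hn) as [D [HD Hsign]].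
    exact (slope_le_max_level w th tau D HD Hsign).
Qed.

Lemma reaches_below c : 0 < c ->
  (forall t, T0 < t -> ~ N t -> exists D, derivable_pt_lim w t D /\ (th <= w t -> D <= - c)) ->
  exists s, T0 <= s /\ w s <= th.
Proof.
  intros Hc Hd. apply NNPP; intro Hno.
  assert (Habove : forall t, T0 <= t -> th < w t)
    by (intros t Ht; apply Rnot_le_lt; intro; apply Hno; eauto).
  (* Above [th], [w] decreases at rate [c], so it would drop below [th] by time [t1]. *)
  set (t1 := T0 + (w T0 - th) / c + 1).
  assert (Ht1 : T0 <= t1).
  { unfold t1. pose proof (Habove T0 (Rle_refl _)).
    assert (0 <= (w T0 - th) / c)
      by (apply Rmult_le_pos; [lra|left; apply Rinv_0_lt_compat; lra]).
    lra. }
  assert (Hdecr : w t1 + c * t1 <= w T0 + c * T0).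
  { apply (abs_cont_on_nonincreasing_deriv (fun y => w y + c * y) t1 T0 t1 N); auto; try lra.
    - apply abs_cont_on_plus; [apply Hac|apply abs_cont_on_scal, abs_cont_on_id].
    - intros tau Htau Hn. destruct (Hd tau ltac:(lra) Hn) as [D [HD Hsign]].
      exists (D + c * 1). split.
      + apply derivable_pt_lim_plus; [exact HD|].
        apply derivable_pt_lim_scal, derivable_pt_lim_id.
      + specialize (Hsign (Rlt_le _ _ (Habove tau ltac:(lra)))). lra. }
  assert (c * (t1 - T0) = w T0 - th + c) by (unfold t1; field; lra).
  pose proof (Habove t1 Ht1). nra.
Qed.

Lemma eventually_below c : 0 < c ->
  (forall t, T0 < t -> ~ N t -> exists D, derivable_pt_lim w t D /\ (th <= w t -> D <= - c)) ->
  exists T, T0 <= T /\ forall t, T <= t -> w t <= th.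
Proof.
  intros Hc Hd. destruct (reaches_below c Hc Hd) as [s [Hs Hws]].
  exists s. split; [exact Hs|]. apply stays_below; auto.
  intros t Ht Hn. destruct (Hd t Ht Hn) as [D [HD Hsign]].
  exists D. split; [exact HD|]. intro Hth. specialize (Hsign Hth). lra.
Qed.

End Threshold.

(** * Quadratic Lyapunov functions along solutions *)

Lemma dot_self_nonneg x : 0 <= dot x x.
Proof. unfold dot. nra. Qed.

Lemma vnorm_nonneg x : 0 <= vnorm x.
Proof. apply sqrt_pos. Qed.

Lemma vnorm_sq x : vnorm x * vnorm x = dot x x.
Proof. unfold vnorm, dot. rewrite sqrt_sqrt; [ring|nra]. Qed.

Lemma vnorm_le_of_sq x B : 0 <= B -> dot x x <= B * B -> vnorm x <= B.
Proof. intros HB H. rewrite <- vnorm_sq in H. pose proof (vnorm_nonneg x). nra. Qed.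

Lemma dot_le_of_vnorm_le x B : vnorm x <= B -> dot x x <= B * B.
Proof. intros H. rewrite <- vnorm_sq. pose proof (vnorm_nonneg x). nra. Qed.

Lemma vnorm_vzero : vnorm vzero = 0.
Proof.
  unfold vnorm, vzero. cbn [fst snd]. replace (0 ^ 2 + 0 ^ 2) with 0 by ring. apply sqrt_0.
Qed.

Lemma vadd_vzero v : vadd v vzero = v.
Proof. destruct v; unfold vadd, vzero; simpl; f_equal; ring. Qed.

Lemma vnorm_le_0 u : vnorm u <= 0 -> u = vzero.
Proof.
  intros Hu. pose proof (dot_le_of_vnorm_le u 0 Hu). unfold dot in *.
  destruct u as [u1 u2]; simpl in *. unfold vzero. f_equal; nra.
Qed.

Lemma cauchy_schwarz x y : Rabs (dot x y) <= vnorm x * vnorm y.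
Proof.
  rewrite <- (Rabs_right (vnorm x * vnorm y))
    by (apply Rle_ge, Rmult_le_pos; apply vnorm_nonneg).
  apply Rsqr_le_abs_0. unfold Rsqr.
  replace ((vnorm x * vnorm y) * (vnorm x * vnorm y)) with (dot x x * dot y y)
    by (rewrite <- !vnorm_sq; ring).
  unfold dot. pose proof (Rle_0_sqr (fst x * snd y - snd x * fst y)). unfold Rsqr in *. nra.
Qed.

Definition quad (c : R) (x : vec2) : R := dot x x + c * (fst x * snd x).

(* Derivative of [s |-> quad (c s) (x s)] when [c' = dc] and [x' = v]. *)
Definition dquad (c dc : R) (x v : vec2) : R :=
  2 * dot x v + dc * (fst x * snd x) + c * (fst v * snd x + fst x * snd v).

Lemma quad_bounds c x : Rabs c <= 1/4 ->
  7/8 * dot x x <= quad c x <= 9/8 * dot x x.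
Proof.
  intros Hc. apply Rabs_le_inv in Hc. unfold quad, dot.
  pose proof (Rle_0_sqr (fst x - snd x)). pose proof (Rle_0_sqr (fst x + snd x)).
  unfold Rsqr in *. split; nra.
Qed.

Lemma derivable_pt_lim_congr (f g : R -> R) t l l' :
  (forall s, f s = g s) -> l = l' -> derivable_pt_lim f t l -> derivable_pt_lim g t l'.
Proof. intros Hfg <-. now apply derivable_pt_lim_ext. Qed.

Lemma derivable_quad_along (c : R -> R) (x : R -> vec2) t dc v :
  derivable_pt_lim c t dc ->
  derivable_pt_lim (fun s => fst (x s)) t (fst v) ->
  derivable_pt_lim (fun s => snd (x s)) t (snd v) ->
  derivable_pt_lim (fun s => quad (c s) (x s)) t (dquad (c t) dc (x t) v).
Proof.
  intros Hc H1 H2.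
  pose proof (derivable_pt_lim_plus _ _ t _ _
    (derivable_pt_lim_plus _ _ t _ _ (derivable_pt_lim_mult _ _ t _ _ H1 H1)
                                     (derivable_pt_lim_mult _ _ t _ _ H2 H2))
    (derivable_pt_lim_mult _ _ t _ _ Hc (derivable_pt_lim_mult _ _ t _ _ H1 H2))) as H.
  refine (derivable_pt_lim_congr _ _ t _ _ (fun s => eq_refl) _ H).
  unfold dquad, dot, mult_fct, plus_fct; cbv beta; ring.
Qed.

Lemma abs_cont_on_quad_along (c : R -> R) (x : R -> vec2) T :
  abs_cont_on c T -> abs_cont_on (fun s => fst (x s)) T -> abs_cont_on (fun s => snd (x s)) T ->
  abs_cont_on (fun s => quad (c s) (x s)) T.
Proof.
  intros Hc H1 H2. unfold quad, dot.
  apply abs_cont_on_plus; [apply abs_cont_on_plus|]; apply abs_cont_on_mult; auto.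
  apply abs_cont_on_mult; auto.
Qed.

Definition damp (x : vec2) : R := / sqrt (1 + dot x x).

Lemma damp_bounds x : 0 < damp x <= 1.
Proof.
  unfold damp. pose proof (dot_self_nonneg x).
  assert (1 <= sqrt (1 + dot x x))
    by (apply Rle_trans with (sqrt 1); [rewrite sqrt_1; lra|apply sqrt_le_1_alt; lra]).
  split; [apply Rinv_0_lt_compat; lra|].
  rewrite <- Rinv_1 at 2. apply Rinv_le_contravar; lra.
Qed.

Lemma damp_sq x : damp x * damp x * (1 + dot x x) = 1.
Proof.
  unfold damp. pose proof (dot_self_nonneg x).
  assert (Hs : 0 < sqrt (1 + dot x x)) by (apply sqrt_lt_R0; lra).
  pose proof (sqrt_sqrt (1 + dot x x) ltac:(lra)) as Hsq.
  set (r := sqrt (1 + dot x x)) in *. rewrite <- Hsq. field. lra.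
Qed.

Lemma derivable_damp_along (x : R -> vec2) t v :
  derivable_pt_lim (fun s => fst (x s)) t (fst v) ->
  derivable_pt_lim (fun s => snd (x s)) t (snd v) ->
  derivable_pt_lim (fun s => damp (x s)) t (- dot (x t) v * damp (x t) ^ 3).
Proof.
  intros H1 H2. pose proof (dot_self_nonneg (x t)) as Hnn.
  assert (Hin : derivable_pt_lim (fun s => 1 + dot (x s) (x s)) t (2 * dot (x t) v)).
  { pose proof (derivable_pt_lim_plus _ _ t _ _ (derivable_pt_lim_const 1 t)
      (derivable_pt_lim_plus _ _ t _ _ (derivable_pt_lim_mult _ _ t _ _ H1 H1)
                                       (derivable_pt_lim_mult _ _ t _ _ H2 H2))) as H.
    refine (derivable_pt_lim_congr _ _ t _ _ (fun s => eq_refl) _ H).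
    unfold dot, mult_fct, plus_fct, fct_cte; cbv beta; ring. }
  assert (Hs : 0 < sqrt (1 + dot (x t) (x t))) by (apply sqrt_lt_R0; lra).
  pose proof (derivable_pt_lim_div _ _ t _ _ (derivable_pt_lim_const 1 t)
    (derivable_pt_lim_comp _ sqrt t _ _ Hin
       (derivable_pt_lim_sqrt (1 + dot (x t) (x t)) ltac:(lra)))
    ltac:(apply Rgt_not_eq, Hs)) as H.
  refine (derivable_pt_lim_congr _ _ t _ _ _ _ H).
  - intros s. unfold damp, fct_cte, div_fct, comp. apply Rmult_1_l.
  - unfold damp, Rsqr, comp, fct_cte. field. lra.
Qed.

Lemma inv_sqrt_lipschitz y z : 1 <= y -> 1 <= z -> Rabs (/ sqrt y - / sqrt z) <= 1 * Rabs (y - z).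
Proof.
  intros Hy Hz.
  assert (HA : 1 <= sqrt y)
    by (apply Rle_trans with (sqrt 1); [rewrite sqrt_1; lra|apply sqrt_le_1_alt; lra]).
  assert (HB : 1 <= sqrt z)
    by (apply Rle_trans with (sqrt 1); [rewrite sqrt_1; lra|apply sqrt_le_1_alt; lra]).
  rewrite <- (sqrt_sqrt y), <- (sqrt_sqrt z) at 2 by lra.
  set (A := sqrt y) in *. set (B := sqrt z) in *.
  replace (/ A - / B) with ((B - A) * / (A * B)) by (field; lra).
  replace (A * A - B * B) with ((A - B) * (A + B)) by ring.
  rewrite !Rabs_mult, (Rabs_right (/ (A * B))), (Rabs_right (A + B)), <- Rabs_Ropp
    by (try apply Rle_ge, Rlt_le, Rinv_0_lt_compat; nra).
  replace (- (B - A)) with (A - B) by ring.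
  assert (/ (A * B) <= 1) by (rewrite <- Rinv_1; apply Rinv_le_contravar; nra).
  pose proof (Rabs_pos (A - B)). nra.
Qed.

Lemma abs_cont_on_damp_along (x : R -> vec2) T :
  abs_cont_on (fun s => fst (x s)) T -> abs_cont_on (fun s => snd (x s)) T ->
  abs_cont_on (fun s => damp (x s)) T.
Proof.
  intros H1 H2.
  apply (abs_cont_on_lipschitz_comp (fun y => / sqrt y) (fun y => 1 <= y) 1
           (fun s => 1 + dot (x s) (x s)) T); [lra| | |exact inv_sqrt_lipschitz].
  - unfold dot. apply abs_cont_on_plus; [apply abs_cont_on_const|].
    apply abs_cont_on_plus; apply abs_cont_on_mult; auto.
  - intros t _ _. pose proof (dot_self_nonneg (x t)). lra.
Qed.

Lemma solution_abs_cont F e x : is_solution F e x -> forall T,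
  abs_cont_on (fun t => fst (x t)) T /\ abs_cont_on (fun t => snd (x t)) T.
Proof.
  intros [Hac _] T. destruct (Rle_lt_dec T 0) as [HT|HT].
  - split; now apply abs_cont_on_nonpos.
  - now apply Hac.
Qed.

Definition lyapunov_along (F : vec2 -> vec2) (V : vec2 -> R) (dV : vec2 -> vec2 -> R) : Prop :=
  forall e x, is_solution F e x ->
    (forall T, abs_cont_on (fun t => V (x t)) T) /\
    exists N, null_set N /\ forall t, 0 < t -> ~ N t ->
      derivable_pt_lim (fun s => V (x s)) t (dV (x t) (vadd (F (x t)) (e t))).

Definition lyap (k : R) (x : vec2) : R := quad (k * damp x) x.
Definition dlyap (k : R) (x v : vec2) : R :=
  dquad (k * damp x) (- k * dot x v * damp x ^ 3) x v.

Lemma lyap_along F k : lyapunov_along F (lyap k) (dlyap k).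
Proof.
  intros e x Hsol. split.
  - intros T. destruct (solution_abs_cont F e x Hsol T) as [H1 H2].
    apply abs_cont_on_quad_along; auto. apply abs_cont_on_scal, abs_cont_on_damp_along; auto.
  - destruct Hsol as [_ [N [HN Hder]]]. exists N. split; [exact HN|].
    intros t Ht HNt. destruct (Hder t Ht HNt) as [H1 H2].
    apply (derivable_quad_along (fun s => k * damp (x s))); auto.
    replace (- k * _ * _) with (k * (- dot (x t) (vadd (F (x t)) (e t)) * damp (x t) ^ 3))
      by ring.
    apply derivable_pt_lim_scal, derivable_damp_along; auto.
Qed.

Lemma quad_along F k : lyapunov_along F (quad k) (fun x v => dquad k 0 x v).
Proof.
  intros e x Hsol. split.
  - intros T. destruct (solution_abs_cont F e x Hsol T) as [H1 H2].
    apply abs_cont_on_quad_along; auto. apply abs_cont_on_const.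
  - destruct Hsol as [_ [N [HN Hder]]]. exists N. split; [exact HN|].
    intros t Ht HNt. destruct (Hder t Ht HNt) as [H1 H2].
    apply (derivable_quad_along (fun _ => k)); auto. apply derivable_pt_lim_const.
Qed.

Section QuadraticLyapunov.

Variables (F : vec2 -> vec2) (V : vec2 -> R) (dV : vec2 -> vec2 -> R).
Hypotheses (HV : lyapunov_along F V dV)
           (Hquad : forall x, 7/8 * dot x x <= V x <= 9/8 * dot x x).

Lemma lyap_stable_of_lyapunov : (forall x, dV x (F x) <= 0) -> lyap_stable F.
Proof.
  intros Hneg eps Heps. exists (eps/2). split; [lra|]. intros x Hsol H0 t Ht.
  destruct (HV no_input x Hsol) as [Hac [N [HN Hder]]].
  assert (Hdecr : V (x t) <= V (x 0)).
  { apply (abs_cont_on_nonincreasing_deriv (fun s => V (x s)) t 0 t N); auto; try lra.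
    intros s Hs Hn. eexists. split; [exact (Hder s ltac:(lra) Hn)|].
    unfold no_input. rewrite vadd_vzero. apply Hneg. }
  pose proof (Hquad (x t)). pose proof (Hquad (x 0)).
  rewrite <- vnorm_sq in *. pose proof (vnorm_nonneg (x 0)). pose proof (vnorm_nonneg (x t)).
  assert (vnorm (x 0) * vnorm (x 0) < eps/2 * (eps/2)) by (apply Rmult_le_0_lt_compat; lra).
  nra.
Qed.

Lemma eventually_bounded_of_lyapunov d e x rho c : 0 < rho -> 0 < c ->
  (forall y u, vnorm u <= d -> rho <= vnorm y -> dV y (vadd (F y) u) <= - c) ->
  eventually_bounded e d -> is_solution F e x -> eventually_bounded x (2 * rho).
Proof.
  intros Hrho Hc Hdecay [T0 [HT0 He]] Hsol.
  destruct (HV e x Hsol) as [Hac [N [HN Hder]]].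
  destruct (eventually_below (fun s => V (x s)) N T0 (9/8 * (rho * rho)) ltac:(lra) Hac HN c Hc)
    as [T [HT Hbelow]].
  - intros t Ht Hn. eexists. split; [exact (Hder t ltac:(lra) Hn)|]. intros Hth.
    apply Hdecay; [apply He; lra|].
    pose proof (Hquad (x t)). rewrite <- vnorm_sq in *. pose proof (vnorm_nonneg (x t)). nra.
  - exists T. split; [lra|]. intros t Ht. specialize (Hbelow t Ht).
    pose proof (Hquad (x t)). apply vnorm_le_of_sq; [lra|].
    rewrite <- vnorm_sq in *. nra.
Qed.

End QuadraticLyapunov.

(** * The damped oscillator *)

Lemma sys_components om be x : sys om be x = (om * snd x, - om * fst x - be * snd x * damp x).
Proof.
  unfold sys, vsub, vscale, A0, b0, damp, Rdiv. simpl.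
  replace (vnorm x * (vnorm x * 1)) with (dot x x) by (rewrite <- vnorm_sq; ring).
  unfold dot; simpl. f_equal; ring.
Qed.

Lemma rotation_damping_ineq om kap c a b :
  0 < om -> 0 <= kap <= 1/2 -> kap <= om * om / 2 -> Rabs c <= 1 ->
  -2 * (b * b) + kap * (b * b - a * a) - kap / om * c * (a * b) <= - kap / 2 * (a * a + b * b).
Proof.
  intros Hom Hkap Hkom Hc. apply Rabs_le_inv in Hc.
  set (q := kap / (2 * (om * om))).
  assert (Hq : 0 <= q <= 1/4).
  { unfold q. split; [apply Rmult_le_pos; [lra|left; apply Rinv_0_lt_compat; nra]|].
    apply Rmult_le_reg_r with (2 * (om * om)); [nra|]. field_simplify; nra. }
  (* The cross term is absorbed by the square [q (om a + c b)^2 >= 0]. *)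
  assert (Hsq : 0 <= q * ((om * a + c * b) * (om * a + c * b)))
    by (apply Rmult_le_pos; [lra|apply Rle_0_sqr]).
  replace (q * ((om * a + c * b) * (om * a + c * b)))
    with (kap / 2 * (a * a) + kap / om * c * (a * b) + q * (c * c) * (b * b)) in Hsq
    by (unfold q; field; lra).
  assert (q * (c * c) * (b * b) <= 1/4 * (b * b))
    by (apply Rmult_le_compat_r; [apply Rle_0_sqr|nra]).
  pose proof (Rle_0_sqr b). unfold Rsqr in *. nra.
Qed.

(* Any [0 < kappa <= min (1/2) (min (om^2 / 2) (om / 4))] would do. *)
Definition kappa (om : R) : R := om * om / (2 + 2 * om * om).

Lemma kappa_bounds om : 0 < om ->
  0 < kappa om /\ kappa om <= 1/2 /\ kappa om <= om * om / 2 /\ kappa om <= om / 4.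
Proof.
  intros Hom. unfold kappa. assert (0 < 2 + 2 * om * om) by nra.
  pose proof (Rle_0_sqr (om - 1)). unfold Rsqr in *.
  repeat split.
  - apply Rdiv_lt_0_compat; nra.
  - apply Rmult_le_reg_r with (2 + 2 * om * om); [lra|]. field_simplify; nra.
  - apply Rmult_le_reg_r with (2 + 2 * om * om); [lra|]. field_simplify; nra.
  - apply Rmult_le_reg_r with (2 + 2 * om * om); [lra|]. field_simplify; nra.
Qed.

Definition cross_weight (om be : R) : R := kappa om * be / om.

Lemma cross_weight_bounds om be : 0 < om -> 0 < be <= 1 ->
  0 <= cross_weight om be <= 1/4.
Proof.
  intros Hom Hbe. destruct (kappa_bounds om Hom) as (Hk0 & _ & _ & Hk4). unfold cross_weight.
  replace (kappa om * be / om) with (kappa om / om * be) by (field; lra).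
  assert (kappa om / om <= 1/4) by (apply Rmult_le_reg_r with om; [lra|]; field_simplify; lra).
  assert (0 <= kappa om / om) by (apply Rmult_le_pos; [lra|left; apply Rinv_0_lt_compat; lra]).
  split; nra.
Qed.

Lemma lyap_bounds om be : 0 < om -> 0 < be <= 1 ->
  forall x, 7/8 * dot x x <= lyap (cross_weight om be) x <= 9/8 * dot x x.
Proof.
  intros Hom Hbe x. apply quad_bounds. pose proof (cross_weight_bounds om be Hom Hbe).
  pose proof (damp_bounds x). rewrite Rabs_right by (apply Rle_ge, Rmult_le_pos; lra). nra.
Qed.

Lemma dlyap_sys om be x : 0 < om -> 0 < be <= 1 ->
  dlyap (cross_weight om be) x (sys om be x) <= - (kappa om * be / 2) * dot x x * damp x.
Proof.
  intros Hom Hbe. destruct (kappa_bounds om Hom) as (Hk0 & Hk1 & Hk2 & _).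
  pose proof (damp_bounds x) as Hz. pose proof (damp_sq x) as Hzz.
  rewrite sys_components. unfold dlyap, dquad, cross_weight, dot in *. simpl in *.
  set (z := damp x) in *. set (a := fst x) in *. set (b := snd x) in *.
  (* Factor [be * z] out; what remains is [rotation_damping_ineq] with [c = be z (1 - b^2 z^2)]. *)
  assert (Hc : Rabs (be * z * (1 - b * b * (z * z))) <= 1).
  { assert (0 <= b * b * (z * z) <= 1) by nra.
    assert (0 < be * z <= 1) by (split; nra).
    rewrite Rabs_right by (apply Rle_ge, Rmult_le_pos; lra). nra. }
  pose proof (rotation_damping_ineq om (kappa om) _ a b Hom ltac:(lra) Hk2 Hc) as Hineq.
  apply Rmult_le_compat_l with (r := be * z) in Hineq; [|nra].
  match goal with |- ?l <= _ => replace l with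
    (be * z * (-2 * (b * b) + kappa om * (b * b - a * a)
               - kappa om / om * (be * z * (1 - b * b * (z * z))) * (a * b))) by (field; lra) end.
  nra.
Qed.

Lemma dlyap_vadd k x v u : dlyap k x (vadd v u) = dlyap k x v + dlyap k x u.
Proof. unfold dlyap, dquad, vadd, dot. simpl. ring. Qed.

Lemma dlyap_input_le k x u : 0 <= k <= 1/4 -> dlyap k x u <= 3 * vnorm x * vnorm u.
Proof.
  intros Hk. pose proof (damp_bounds x) as Hz. pose proof (damp_sq x) as Hzz.
  pose proof (cauchy_schwarz x u) as HP.
  pose proof (cauchy_schwarz (snd x, fst x) u) as HQ.
  replace (vnorm (snd x, fst x)) with (vnorm x) in HQ by (unfold vnorm; simpl; f_equal; ring).
  assert (HA : Rabs (fst x * snd x) <= dot x x / 2).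
  { apply Rabs_le. unfold dot. pose proof (Rle_0_sqr (fst x - snd x)).
    pose proof (Rle_0_sqr (fst x + snd x)). unfold Rsqr in *. split; nra. }
  pose proof (vnorm_nonneg x). pose proof (vnorm_nonneg u).
  assert (Hrm : 0 <= vnorm x * vnorm u) by (apply Rmult_le_pos; lra).
  set (z := damp x) in *. set (A := fst x * snd x) in *.
  assert (Hcoef : Rabs (k * z ^ 3 * A) <= 1/8).
  { rewrite Rabs_mult, (Rabs_right (k * z ^ 3)) by (apply Rle_ge, Rmult_le_pos; simpl; nra).
    assert (Hz2 : z * z * dot x x <= 1) by (pose proof (dot_self_nonneg x); nra).
    assert (Hz3 : 0 <= z ^ 3) by (simpl; nra).
    assert (z ^ 3 * Rabs A <= 1/2).
    { apply Rle_trans with (z ^ 3 * (dot x x / 2)); [now apply Rmult_le_compat_l|].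
      simpl. nra. }
    pose proof (Rabs_pos A).
    replace (k * z ^ 3 * Rabs A) with (k * (z ^ 3 * Rabs A)) by ring. nra. }
  apply Rabs_le_inv in Hcoef, HP, HQ.
  replace (dlyap k x u) with ((2 - k * z ^ 3 * A) * dot x u + k * z * dot (snd x, fst x) u)
    by (unfold dlyap, dquad, dot; simpl; fold z A; ring).
  assert ((2 - k * z ^ 3 * A) * dot x u <= 17/8 * (vnorm x * vnorm u)) by nra.
  assert (Hkz : 0 <= k * z <= 1/4) by (split; nra).
  assert (k * z * dot (snd x, fst x) u <= 1/4 * (vnorm x * vnorm u)) by nra.
  lra.
Qed.

(* Once [|x| >= 7 d / a], the decay [a |x|^2 / sqrt (1 + |x|^2)] beats the input term [3 |x| d]. *)
Lemma decay_dominates_input a r z d : 0 < a -> 0 < d <= a / 12 -> 7 * d / a <= r ->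
  0 < z -> z * z * (1 + r * r) = 1 -> - a * (r * r) * z + 3 * r * d <= - 3 * d * (7 * d / a).
Proof.
  intros Ha Hd Hr Hz Hzr. set (rho := 7 * d / a) in *.
  assert (Hrho : a * rho = 7 * d) by (unfold rho; field; lra).
  assert (Harz : 6 * d <= a * r * z).
  { assert (H7 : 7 * d <= a * r) by (rewrite <- Hrho; apply Rmult_le_compat_l; lra).
    assert (H49 : 49 * d * d <= a * a * (r * r)) by nra.
    assert (H144 : 144 * d * d <= a * a) by nra.
    assert (36 * d * d * (r * r) <= a * a / 4 * (r * r))
      by (apply Rmult_le_compat_r; [apply Rle_0_sqr|lra]).
    assert (H36 : 36 * d * d * (1 + r * r) <= a * a * (r * r)) by nra.
    apply Rsqr_incr_0_var; [unfold Rsqr|apply Rmult_le_pos; nra].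
    replace (a * r * z * (a * r * z)) with (a * a * (r * r) * (z * z)) by ring. nra. }
  assert (0 < rho) by (unfold rho; apply Rdiv_lt_0_compat; lra). nra.
Qed.

Lemma sys_input_decay om be d y u : 0 < om -> 0 < be <= 1 ->
  0 < d <= be * (kappa om / 24) -> vnorm u <= d ->
  7 * d / (kappa om * be / 2) <= vnorm y ->
  dlyap (cross_weight om be) y (vadd (sys om be y) u)
    <= - (3 * d * (7 * d / (kappa om * be / 2))).
Proof.
  intros Hom Hbe Hd Hu Hy. destruct (kappa_bounds om Hom) as (Hk0 & _).
  rewrite dlyap_vadd.
  pose proof (dlyap_sys om be y Hom Hbe).
  pose proof (dlyap_input_le _ y u (cross_weight_bounds om be Hom Hbe)).
  pose proof (damp_sq y) as Hzz. rewrite <- vnorm_sq in Hzz. rewrite <- vnorm_sq in *.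
  pose proof (vnorm_nonneg y). pose proof (damp_bounds y).
  pose proof (decay_dominates_input (kappa om * be / 2) (vnorm y) (damp y) d
                ltac:(nra) ltac:(lra) Hy ltac:(lra) Hzz).
  assert (vnorm y * vnorm u <= vnorm y * d) by (apply Rmult_le_compat_l; lra).
  nra.
Qed.

Section System.

Variables om be : R.
Hypotheses (Hom : 0 < om) (Hbe : 0 < be <= 1).

Lemma sys_eventually_bounded d e x : 0 < d <= be * (kappa om / 24) ->
  eventually_bounded e d -> is_solution (sys om be) e x ->
  eventually_bounded x (28 / kappa om / be * d).
Proof.
  intros Hd He Hsol. destruct (kappa_bounds om Hom) as (Hk0 & _).
  replace (28 / kappa om / be * d) with (2 * (7 * d / (kappa om * be / 2))) by (field; lra).
  assert (Hrho : 0 < 7 * d / (kappa om * be / 2)) by (apply Rdiv_lt_0_compat; nra).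
  apply (eventually_bounded_of_lyapunov (sys om be) _ _ (lyap_along _ (cross_weight om be))
           (lyap_bounds om be Hom Hbe) d e x _ (3 * d * (7 * d / (kappa om * be / 2))));
    [exact Hrho|nra| |exact He|exact Hsol].
  intros y u Hu Hy. now apply sys_input_decay.
Qed.

Lemma sys_SISS : SISS_L (sys om be) (be * (kappa om / 24)) (28 / kappa om / be).
Proof. intros d Hd e _ _ He x Hsol. exact (sys_eventually_bounded d e x Hd He Hsol). Qed.

Lemma sys_glob_asympt_stable : glob_asympt_stable (sys om be).
Proof.
  destruct (kappa_bounds om Hom) as (Hk0 & _). split.
  - apply (lyap_stable_of_lyapunov _ _ _ (lyap_along _ (cross_weight om be))
             (lyap_bounds om be Hom Hbe)).
    intros x. pose proof (dlyap_sys om be x Hom Hbe). pose proof (damp_bounds x).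
    pose proof (dot_self_nonneg x).
    assert (0 <= kappa om * be / 2 * dot x x * damp x)
      by (apply Rmult_le_pos; [apply Rmult_le_pos|]; nra).
    lra.
  - (* A solution without input is a solution with an arbitrarily small input. *)
    intros x Hsol eps Heps.
    set (d := Rmin (be * (kappa om / 24)) (eps * kappa om * be / 56)).
    assert (Hd : 0 < d <= be * (kappa om / 24)).
    { split; [|apply Rmin_l]. apply Rmin_glb_lt; [apply Rmult_lt_0_compat; lra|].
      apply Rdiv_lt_0_compat; [|lra]. apply Rmult_lt_0_compat; [apply Rmult_lt_0_compat|]; lra. }
    destruct (sys_eventually_bounded d no_input x Hd) as [T [_ HT]]; [|exact Hsol|].
    + exists 1. split; [lra|]. intros t _. unfold no_input. rewrite vnorm_vzero. lra.
    + exists T. intros t Ht. specialize (HT t Ht).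
      assert (28 / kappa om / be * d <= eps / 2).
      { apply Rle_trans with (28 / kappa om / be * (eps * kappa om * be / 56)).
        - apply Rmult_le_compat_l; [|apply Rmin_r].
          apply Rmult_le_pos; [apply Rmult_le_pos|]; try lra;
            left; apply Rinv_0_lt_compat; lra.
        - right. field. lra. }
      lra.
Qed.

Definition jac : mat2 := Mat2 0 om (- om) (- be).

Lemma dquad_jac x :
  dquad (cross_weight om be) 0 x (mapply jac x) <= - (kappa om * be / 2) * dot x x.
Proof.
  destruct (kappa_bounds om Hom) as (Hk0 & Hk1 & Hk2 & _).
  assert (Hc : Rabs be <= 1) by (rewrite Rabs_right; lra).
  pose proof (rotation_damping_ineq om (kappa om) be (fst x) (snd x) Hom ltac:(lra) Hk2 Hc)
    as Hineq.
  apply Rmult_le_compat_l with (r := be) in Hineq; [|lra].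
  unfold dquad, mapply, jac, cross_weight, dot; simpl.
  match goal with |- ?l <= _ => replace l with
    (be * (-2 * (snd x * snd x) + kappa om * (snd x * snd x - fst x * fst x)
           - kappa om / om * be * (fst x * snd x))) by (field; lra) end.
  nra.
Qed.

Lemma jac_asympt_stable : asympt_stable (mapply jac).
Proof.
  destruct (kappa_bounds om Hom) as (Hk0 & _).
  pose proof (cross_weight_bounds om be Hom Hbe) as Hk.
  assert (Hquad : forall x, 7/8 * dot x x <= quad (cross_weight om be) x <= 9/8 * dot x x)
    by (intros; apply quad_bounds; rewrite Rabs_right; lra).
  assert (Ha : 0 < kappa om * be / 2) by nra.
  split.
  - apply (lyap_stable_of_lyapunov _ _ _ (quad_along _ (cross_weight om be)) Hquad).
    intros x. pose proof (dquad_jac x). pose proof (dot_self_nonneg x). nra.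
  - exists 1. split; [lra|]. intros x Hsol _ eps Heps.
    destruct (eventually_bounded_of_lyapunov (mapply jac) _ _
                (quad_along _ (cross_weight om be)) Hquad
                0 no_input x (eps / 4) (kappa om * be / 2 * (eps / 4 * (eps / 4))))
      as [T [_ HT]]; [lra|apply Rmult_lt_0_compat; nra| | |exact Hsol|].
    + intros y u Hu Hy. rewrite (vnorm_le_0 u Hu), vadd_vzero.
      pose proof (dquad_jac y). rewrite <- vnorm_sq in *.
      assert (Hsq : eps / 4 * (eps / 4) <= vnorm y * vnorm y) by (apply Rmult_le_compat; lra).
      pose proof (Rmult_le_compat_l _ _ _ (Rlt_le _ _ Ha) Hsq). lra.
    + exists 1. split; [lra|]. intros t _. unfold no_input. rewrite vnorm_vzero. lra.
    + exists T. intros t Ht. specialize (HT t Ht). lra.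
Qed.

Lemma sys_frechet_deriv : frechet_deriv_at0 (sys om be) jac.
Proof.
  intros eps Heps. exists (Rmin 1 eps). split; [apply Rmin_glb_lt; lra|].
  intros x Hx. pose proof (Rmin_l 1 eps). pose proof (Rmin_r 1 eps).
  pose proof (vnorm_nonneg x) as Hr0. pose proof (vnorm_sq x) as Hrr.
  pose proof (damp_bounds x) as Hz. pose proof (damp_sq x) as Hzz. rewrite <- Hrr in Hzz.
  apply vnorm_le_of_sq; [apply Rmult_le_pos; lra|].
  rewrite !sys_components. unfold vsub, mapply, jac, vzero, dot; simpl.
  (* The only nonlinearity is [be * x2 * (1 - damp x)], and
     [1 - damp x <= 1 - damp x ^ 2 <= |x|^2]. *)
  set (r := vnorm x) in *. set (z := damp x) in *.
  assert (Hq : 0 <= 1 - z <= r * r) by (split; nra).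
  match goal with |- ?l <= _ => replace l with ((be * snd x * (1 - z)) * (be * snd x * (1 - z)))
    by ring end.
  assert (Hb : be * be * (snd x * snd x) <= r * r)
    by (unfold dot in Hrr; assert (be * be <= 1) by nra;
        pose proof (Rle_0_sqr (fst x)); pose proof (Rle_0_sqr (snd x)); unfold Rsqr in *; nra).
  assert (Hq2 : (1 - z) * (1 - z) <= eps * eps) by (apply Rmult_le_compat; nra).
  replace ((be * snd x * (1 - z)) * (be * snd x * (1 - z)))
    with ((be * be * (snd x * snd x)) * ((1 - z) * (1 - z))) by ring.
  replace (eps * r * (eps * r)) with ((r * r) * (eps * eps)) by ring.
  apply Rmult_le_compat; auto; [nra|apply Rle_0_sqr].
Qed.

End System.

Theorem lemma3 :
  forall omega : R, 0 < omega ->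
  exists Gamma N : R, 0 < Gamma /\ 0 < N /\
    forall beta : R, 0 < beta <= 1 ->
      SISS_L (sys omega beta) (beta * Gamma) (N / beta) /\
      glob_asympt_stable (sys omega beta) /\
      linearization_AS (sys omega beta).
Proof.
  intros om Hom. destruct (kappa_bounds om Hom) as (Hk0 & _).
  exists (kappa om / 24), (28 / kappa om).
  split; [lra|]. split; [apply Rdiv_lt_0_compat; lra|].
  intros be Hbe. split; [|split].
  - now apply sys_SISS.
  - now apply sys_glob_asympt_stable.
  - exists (jac om be). split; [now apply sys_frechet_deriv|now apply jac_asympt_stable].
Qed.
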